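(* (Equivalent form of the basic scheme.) Let $u:P\to\mathbb{R}^3$ be a $\Lambda$-periodic field whose Fourier transform satisfies $\hat u(0)=\hat u((\pi,\pi,\pi))=0$, and let $\sigma^{(m)},\tau^{(m)}$ ($m=1,2$) be computed from $u$. Then for every $q\in\mathcal{Q}_N$, $$\Omega(q)\cdot\big\{-\hat\tau^{(1)}(q)\cdot\overline{D(q)}+\hat\tau^{(2)}(q)\cdot D(q)\big\}=\hat u(q)-\Omega(q)\cdot\big\{\hat\sigma^{(1)}(q)\cdot\overline{D(q)}-\hat\sigma^{(2)}(q)\cdot D(q)\big\}.$$ Equivalently, for every $q\in\mathcal{Q}_N$ and every $v\in\mathbb{C}^3$ with $v=0$ when $D(q)=0$: $\Omega(q)\cdot\big\{(\lambda^0:(D(q)\otimes_s v))\cdot\overline{D(q)}+(\lambda^0:(\overline{D(q)}\otimes_s v))\cdot D(q)\big\}=v$.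
   Context: Setting: $N_1,N_2,N_3$ even, $N=N_1N_2N_3$, $\Lambda=N_1\mathbb{Z}\times N_2\mathbb{Z}\times N_3\mathbb{Z}$; strain grid $S=\mathbb{Z}^3$, displacement grid $P=(\tfrac12,\tfrac12,\tfrac12)+\mathbb{Z}^3$, fields $\Lambda$-periodic, sums over one period. $\hat f(q)=\frac1N\sum_r f(r)e^{-iq\cdot r}$, $q\in\mathcal{Q}_N=\{(2\pi h_1/N_1,2\pi h_2/N_2,2\pi h_3/N_3):0\le h_i\le N_i-1\}$. $T=\{\tfrac12(1,1,1),\tfrac12(1,-1,-1),\tfrac12(-1,1,-1),\tfrac12(-1,-1,1)\}$, $D_i(q)=\sum_{e\in T}e_ie^{iq\cdot e}$. For scalar $f$ on $P$, $r\in S$: $D^+_i[f](r)=\sum_{e\in T}e_if(r+e)$, $D^-_i[f](r)=-\sum_{e\in T}e_if(r-e)$. $\delta\epsilon^{(m)}_{ij}=\frac12(D^{\pm}_i[u_j]+D^{\pm}_j[u_i])$ ($+$ for $m=1$, $-$ for $m=2$), $\epsilon^{(m)}=\bar\epsilon+\delta\epsilon^{(m)}$ ($\bar\epsilon$ fixed symmetric), $\sigma^{(m)}=\lambda(r):(\epsilon^{(m)}-\epsilon^0(r))$ with periodic stiffness $\lambda(r)$ (minor and major symmetries) and periodic symmetric eigenstrain $\epsilon^0$; $\tau^{(m)}=\sigma^{(m)}-\lambda^0:\epsilon^{(m)}$ with $\lambda^0$ constant, with minor and major symmetries, positive definite on symmetric matrices. $M_{jk}(q)=\sum_{i,l}\lambda^0_{ijkl}(\overline{D_i}D_l+D_i\overline{D_l})(q)$;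 $\Omega(q)=M(q)^{-1}$ if $D(q)\ne0$ and $\Omega(q)=0$ otherwise. Notation: $(a\otimes_s b)_{ij}=\frac12(a_ib_j+a_jb_i)$, $(\sigma\cdot v)_i=\sum_j\sigma_{ij}v_j$, $(\lambda:\xi)_{ij}=\sum_{kl}\lambda_{ijkl}\xi_{kl}$, overline = complex conjugation. *)

From HB Require Import structures.
From mathcomp Require Import all_boot all_order all_algebra.
From mathcomp Require Import reals trigo.
From mathcomp Require Import complex.
Set Implicit Arguments. Unset Strict Implicit. Unset Printing Implicit Defensive.
Import Order.TTheory GRing.Theory Num.Theory.
Local Open Scope ring_scope.

Section Defs.
Variable R : realType.
Local Notation C := (R[i]).

Definition toC (x : R) : C := (x%:C)%C.

Definition expi (t : R) : C := Complex (cos t) (sin t).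

Definition vec3 (x y z : R) : 'cV[R]_3 := \col_(i < 3) [:: x; y; z]`_i.

Definition dotp (a b : 'cV[R]_3) : R := \sum_(i < 3) a i ord0 * b i ord0.

Definition lat (a b c : int) : 'cV[R]_3 := vec3 a%:~R b%:~R c%:~R.

(* base points: S = 0 + Z^3, P = (1/2,1/2,1/2) + Z^3 *)
Definition baseS : 'cV[R]_3 := 0.
Definition baseP : 'cV[R]_3 := vec3 (1/2) (1/2) (1/2).

Definition Tset : seq 'cV[R]_3 :=
  [:: vec3 (1/2) (1/2) (1/2); vec3 (1/2) (-(1/2)) (-(1/2));
      vec3 (-(1/2)) (1/2) (-(1/2)); vec3 (-(1/2)) (-(1/2)) (1/2)].

Definition periodic_on (T : Type) (N1 N2 N3 : nat) (base : 'cV[R]_3)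
  (f : 'cV[R]_3 -> T) : Prop :=
  forall k1 k2 k3 a b c : int,
    f (base + lat (k1 + a * N1%:Z) (k2 + b * N2%:Z) (k3 + c * N3%:Z))
    = f (base + lat k1 k2 k3).

Definition fhat (N1 N2 N3 : nat) (base : 'cV[R]_3) (f : 'cV[R]_3 -> C)
  (q : 'cV[R]_3) : C :=
  (N1 * N2 * N3)%:R^-1 *
  \sum_(a < N1) \sum_(b < N2) \sum_(c < N3)
     f (base + lat a b c) * expi (- dotp q (base + lat a b c)).

Definition vhatP N1 N2 N3 (u : 'cV[R]_3 -> 'cV[R]_3) (q : 'cV[R]_3)
  : 'cV[C]_3 :=
  \col_(j < 3) fhat N1 N2 N3 baseP (fun r => toC (u r j ord0)) q.

Definition mhatS N1 N2 N3 (s : 'cV[R]_3 -> 'M[R]_3) (q : 'cV[R]_3)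
  : 'M[C]_3 :=
  \matrix_(i < 3, j < 3) fhat N1 N2 N3 baseS (fun r => toC (s r i j)) q.

Definition qvec (N1 N2 N3 : nat) (h1 : 'I_N1) (h2 : 'I_N2) (h3 : 'I_N3)
  : 'cV[R]_3 :=
  vec3 (2 * pi * h1%:R / N1%:R) (2 * pi * h2%:R / N2%:R)
       (2 * pi * h3%:R / N3%:R).

Definition Dvec (q : 'cV[R]_3) : 'cV[C]_3 :=
  \col_(i < 3) \sum_(e <- Tset) toC (e i ord0) * expi (dotp q e).

Definition conjv (v : 'cV[C]_3) : 'cV[C]_3 := map_mx (@conjc R) v.

Definition tensor4 := 'I_3 -> 'I_3 -> 'I_3 -> 'I_3 -> R.

Definition minor_sym (L : tensor4) : Prop :=
  forall i j k l, L i j k l = L j i k l /\ L i j k l = L i j l k.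
Definition major_sym (L : tensor4) : Prop :=
  forall i j k l, L i j k l = L k l i j.
Definition posdef_sym (L : tensor4) : Prop :=
  forall xi : 'M[R]_3, xi^T = xi -> xi != 0 ->
    0 < \sum_(i < 3) \sum_(j < 3) \sum_(k < 3) \sum_(l < 3)
          xi i j * L i j k l * xi k l.

Definition ddot (L : tensor4) (xi : 'M[R]_3) : 'M[R]_3 :=
  \matrix_(i < 3, j < 3) \sum_(k < 3) \sum_(l < 3) L i j k l * xi k l.
Definition ddotC (L : tensor4) (xi : 'M[C]_3) : 'M[C]_3 :=
  \matrix_(i < 3, j < 3) \sum_(k < 3) \sum_(l < 3) toC (L i j k l) * xi k l.

Definition symt (a b : 'cV[C]_3) : 'M[C]_3 :=
  \matrix_(i < 3, j < 3) ((a i ord0 * b j ord0 + a j ord0 * b i ord0) / 2).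

(* discrete derivatives of a scalar field f on P, evaluated at r in S *)
Definition Dplus (f : 'cV[R]_3 -> R) (r : 'cV[R]_3) (i : 'I_3) : R :=
  \sum_(e <- Tset) e i ord0 * f (r + e).
Definition Dminus (f : 'cV[R]_3 -> R) (r : 'cV[R]_3) (i : 'I_3) : R :=
  - \sum_(e <- Tset) e i ord0 * f (r - e).

(* m = 1 uses D^+ (b = true), m = 2 uses D^- (b = false) *)
Definition Dpm (b : bool) := if b then Dplus else Dminus.

Definition deps (b : bool) (u : 'cV[R]_3 -> 'cV[R]_3) (r : 'cV[R]_3)
  : 'M[R]_3 :=
  \matrix_(i < 3, j < 3)
    ((Dpm b (fun x => u x j ord0) r i + Dpm b (fun x => u x i ord0) r j) / 2).

Definition epsm (b : bool) (epsbar : 'M[R]_3) u r : 'M[R]_3 :=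
  epsbar + deps b u r.

Definition sigmam (b : bool) (lam : 'cV[R]_3 -> tensor4)
  (eps0 : 'cV[R]_3 -> 'M[R]_3) epsbar u r : 'M[R]_3 :=
  ddot (lam r) (epsm b epsbar u r - eps0 r).

Definition taum (b : bool) (lam : 'cV[R]_3 -> tensor4)
  (eps0 : 'cV[R]_3 -> 'M[R]_3) (lam0 : tensor4) epsbar u r : 'M[R]_3 :=
  sigmam b lam eps0 epsbar u r - ddot lam0 (epsm b epsbar u r).

Definition Mmat (lam0 : tensor4) (q : 'cV[R]_3) : 'M[C]_3 :=
  let D := Dvec q in
  \matrix_(j < 3, k < 3) \sum_(i < 3) \sum_(l < 3)
     toC (lam0 i j k l) *
       (conjc (D i ord0) * D l ord0 + D i ord0 * conjc (D l ord0)).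

Definition Omega (lam0 : tensor4) (q : 'cV[R]_3) : 'M[C]_3 :=
  if Dvec q == 0 then 0 else invmx (Mmat lam0 q).

End Defs.

From HB Require Import structures.
From mathcomp Require Import all_boot all_order all_algebra.
From mathcomp Require Import reals trigo.
From mathcomp Require Import complex.
From mathcomp Require Import ring lra.
Set Implicit Arguments. Unset Strict Implicit. Unset Printing Implicit Defensive.
Import Order.TTheory GRing.Theory Num.Theory.
Local Open Scope ring_scope.

(* Periodicity lets the summation window of the discrete Fourier transform be
   moved along the lattice, so translating a field on P by a vector e of
   P - S multiplies its transform by e^{iq.e}.  Hence D^+ and D^- act on
   transforms as multiplication by D(q) and -conj(D(q)), and
   tau^(m)^ = sigma^(m)^ - lambda0 : (F epsbar + D^(m) (x)_s u^), where F is the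
   transform of the constant 1 on S.  Substituting, the u^-terms reassemble
   into M(q) u^, which Omega(q) inverts: M(q) is the complexification of a real
   matrix whose quadratic form is a sum of two lambda0-energies of symmetric
   strains, hence definite when D(q) <> 0.  The epsbar-term carries the factor
   F, and F <> 0 forces e^{-iq.t} = 1 on the lattice, i.e. D(q) = 0 and
   Omega(q) = 0.  Finally D(q) = 0 only at q = 0 and q = (pi,pi,pi), where u^
   vanishes by hypothesis. *)

Section PeriodicSum.
Variables (V : zmodType) (N : nat).
Hypothesis N_gt0 : (0 < N)%N.

Lemma sum_ord_periodic_shiftn (F : int -> V) :
  (forall k, F (k + N%:Z) = F k) ->
  forall n : nat, \sum_(a < N) F (a%:Z + n%:Z) = \sum_(a < N) F a%:Z.
Proof.
move=> F_per; elim=> [|n IHn]; first by apply: eq_bigr => a _; rewrite addr0.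
have -> : \sum_(a < N) F (a%:Z + n.+1%:Z) = \sum_(a < N) F (a.+1%:Z + n%:Z).
  by apply: eq_bigr => a _; congr F; rewrite -!PoszD addnS.
rewrite -IHn; move: F_per; case: N N_gt0 => // M _ F_per.
rewrite big_ord_recr big_ord_recl /= addrC; congr (_ + _).
by rewrite add0r addrC F_per.
Qed.

Lemma sum_ord_periodic_shift (F : int -> V) :
  (forall k, F (k + N%:Z) = F k) ->
  forall s : int, \sum_(a < N) F (a%:Z + s) = \sum_(a < N) F a%:Z.
Proof.
move=> F_per [n|n]; first exact: sum_ord_periodic_shiftn.
pose G k := F (k - n.+1%:Z).
have G_per k : G (k + N%:Z) = G k by rewrite /G addrAC F_per.
rewrite NegzE -(sum_ord_periodic_shiftn G_per n.+1).
by apply: eq_bigr => a _; rewrite /G addrK.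
Qed.
End PeriodicSum.

Lemma sum_ord3_periodic_shift (V : zmodType) (N1 N2 N3 : nat)
    (G : int -> int -> int -> V) :
  (0 < N1)%N -> (0 < N2)%N -> (0 < N3)%N ->
  (forall a b c, G (a + N1%:Z) b c = G a b c) ->
  (forall a b c, G a (b + N2%:Z) c = G a b c) ->
  (forall a b c, G a b (c + N3%:Z) = G a b c) ->
  forall s1 s2 s3 : int,
  \sum_(a < N1) \sum_(b < N2) \sum_(c < N3)
     G (a%:Z + s1) (b%:Z + s2) (c%:Z + s3)
  = \sum_(a < N1) \sum_(b < N2) \sum_(c < N3) G a b c.
Proof.
move=> N1_gt0 N2_gt0 N3_gt0 G1 G2 G3 s1 s2 s3.
under eq_bigr => a _ do under eq_bigr => b _ do
  rewrite (sum_ord_periodic_shift N3_gt0 (G3 _ _)).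
have G2' a : \sum_(b < N2) \sum_(c < N3) G a (b%:Z + s2) c
             = \sum_(b < N2) \sum_(c < N3) G a b c.
  apply: (sum_ord_periodic_shift (F := fun b => \sum_(c < N3) G a b c) N2_gt0).
  by move=> k; apply: eq_bigr => c _; rewrite G2.
under eq_bigr => a _ do rewrite G2'.
apply: (sum_ord_periodic_shift (F := fun a => \sum_(b < N2) \sum_(c < N3) G a b c) N1_gt0).
by move=> k; apply: eq_bigr => b _; apply: eq_bigr => c _; rewrite G1.
Qed.

Section Grid.
Variable R : realType.

Ltac vec3_ext := apply/matrixP; case=> [[|[|[|?]]]] ? ?; rewrite !mxE.

Lemma vec3D (a b c x y z : R) :
  vec3 a b c + vec3 x y z = vec3 (a + x) (b + y) (c + z).
Proof. by vec3_ext. Qed.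

Lemma vec3N (a b c : R) : - vec3 a b c = vec3 (- a) (- b) (- c).
Proof. by vec3_ext. Qed.

Lemma vec30 : vec3 0 0 0 = 0 :> 'cV[R]_3.
Proof. by vec3_ext. Qed.

Lemma dotp_vec3 (a b c x y z : R) :
  dotp (vec3 a b c) (vec3 x y z) = a * x + b * y + c * z.
Proof. by rewrite /dotp !big_ord_recr big_ord0 !mxE /= add0r. Qed.

Lemma dotpD (q x y : 'cV[R]_3) : dotp q (x + y) = dotp q x + dotp q y.
Proof. by rewrite /dotp -big_split; apply: eq_bigr => i _; rewrite mxE mulrDr. Qed.

Lemma dotpN (q x : 'cV[R]_3) : dotp q (- x) = - dotp q x.
Proof. by rewrite /dotp -sumrN; apply: eq_bigr => i _; rewrite mxE mulrN. Qed.

Lemma latD (a b c a' b' c' : int) :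
  lat R (a + a') (b + b') (c + c') = lat R a b c + lat R a' b' c'.
Proof. by rewrite /lat vec3D !intrD. Qed.

Definition SP_offset (e : 'cV[R]_3) :=
  exists s1 s2 s3 : int, baseS R + e = baseP R + lat R s1 s2 s3.

Lemma SP_offset_vec3_half (x y z : R) :
  `|x| = 1/2 -> `|y| = 1/2 -> `|z| = 1/2 -> SP_offset (vec3 x y z).
Proof.
have half_offset (t : R) : `|t| = 1/2 -> exists s : int, t = 1/2 + s%:~R.
  have [t_ge0 | t_lt0] := lerP 0 t.
    by rewrite ger0_norm // => ->; exists 0; rewrite addr0.
  by rewrite ltr0_norm // => t_half; exists (-1); rewrite intrN; lra.
move=> /half_offset[s1 ->] /half_offset[s2 ->] /half_offset[s3 ->].
by exists s1, s2, s3; rewrite /baseS /baseP /lat add0r vec3D.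
Qed.

Lemma Tset_SP_offset e : e \in Tset R -> SP_offset e /\ SP_offset (- e).
Proof.
have half : `|1/2 : R| = 1/2 by rewrite ger0_norm // divr_ge0.
by rewrite !inE => /or4P[] /eqP ->; rewrite vec3N ?opprK;
  split; apply: SP_offset_vec3_half; rewrite ?normrN.
Qed.

Lemma qvec_coord_mul (N : nat) (h : 'I_N) :
  N%:R * (2 * pi * h%:R / N%:R) = 2 * pi * h%:R :> R.
Proof.
have N_gt0 : (0 < N)%N by apply: leq_ltn_trans (ltn_ord h).
by rewrite mulrC divfK // pnatr_eq0 -lt0n.
Qed.

Lemma qvec_coord_bound (N : nat) (h : 'I_N) :
  0 <= 2 * (pi : R) * h%:R / N%:R < 2 * pi.
Proof.
have N_gt0 : 0 < N%:R :> R by rewrite ltr0n (leq_ltn_trans _ (ltn_ord h)).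
have hN : h%:R + 1 <= N%:R :> R by rewrite natr1 ler_nat.
have h_ge0 : 0 <= h%:R :> R by [].
have pi_gt0 := @pi_gt0 R.
have x_N : 2 * pi * h%:R / N%:R * N%:R = 2 * pi * h%:R :> R.
  by rewrite divfK // gt_eqF.
apply/andP; split; first by rewrite divr_ge0 // ?mulr_ge0 // ltW.
nra.
Qed.

End Grid.

Section ComplexExponential.
Variable R : realType.

Lemma expiD (s t : R) : expi (s + t) = expi s * expi t.
Proof.
rewrite /expi cosD sinD -[((_ +i* _)%C * (_ +i* _)%C)]/(_ +i* _)%C.
by congr Complex; ring.
Qed.

Lemma expi0 : expi (0 : R) = 1.
Proof. by rewrite /expi cos0 sin0. Qed.

Lemma expiNr (t : R) : expi (- t) * expi t = 1.
Proof. by rewrite -expiD addNr expi0. Qed.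

Lemma expi_neq0 (t : R) : expi t != 0.
Proof.
by apply/eqP => t0; have /eqP := expiNr t; rewrite t0 mulr0 eq_sym oner_eq0.
Qed.

Lemma conjc_expi (t : R) : conjc (expi t) = expi (- t).
Proof. by rewrite /expi cosN sinN. Qed.

Lemma expiD2pin (t : R) (n : nat) : expi (t + 2 * pi * n%:R) = expi t.
Proof.
have -> : 2 * pi * n%:R = (pi *+ 2) *+ n :> R.
  by rewrite -mulrnA -[in RHS]mulr_natr natrM; ring.
by rewrite /expi (periodicn (@cosD2pi R)) (periodicn (@sinD2pi R)).
Qed.

Lemma cos_eq1_02pi (t : R) : 0 <= t -> t < 2 * pi -> cos t = 1 -> t = 0.
Proof.
move=> t_ge0 t_lt2pi cos_t.
have sin_t : sin t = 0.
  have := cos2Dsin2 t; rewrite cos_t expr1n -{2}[1]addr0 => /addrI /eqP.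
  by rewrite sqrf_eq0 => /eqP.
case: (ltrgtP t pi) => [t_ltpi|t_gtpi|t_pi]; last by move: cos_t; rewrite t_pi cospi; lra.
- case: (ltrgtP 0 t) => [t_gt0|t_lt0|//]; last by move: t_ge0; rewrite leNgt t_lt0.
  by have := sin_gt0_pi (introT andP (conj t_gt0 t_ltpi)); rewrite sin_t ltxx.
- have : 0 < sin (t - pi) by apply: sin_gt0_pi; apply/andP; split; lra.
  have := sinDpi (t - pi); rewrite subrK sin_t => /eqP.
  by rewrite eq_sym oppr_eq0 => /eqP ->; rewrite ltxx.
Qed.

Lemma cos_eq1_04pi (t : R) :
  0 <= t -> t < 4 * pi -> cos t = 1 -> t = 0 \/ t = 2 * pi.
Proof.
move=> t_ge0 t_lt4pi cos_t; have pi_gt0 := @pi_gt0 R.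
case: (ltP t (2 * pi)) => t2pi; first by left; exact: cos_eq1_02pi.
right; suff : t - 2 * pi = 0 by lra.
apply: cos_eq1_02pi; [lra|lra|].
have := periodicn (@cosD2pi R) 1%N (t - 2 * pi).
by rewrite mulr1n (_ : pi *+ 2 = 2 * pi) ?subrK ?cos_t // mulr_natl.
Qed.

Lemma expiD2piz (t : R) (m : int) :
  expi (t + 2 * pi * m%:~R) = expi t.
Proof.
case: m => n; first exact: expiD2pin.
rewrite -[in RHS](subrK (2 * pi * n.+1%:R) t) expiD2pin NegzE mulrNz.
by congr expi; rewrite mulrN.
Qed.

End ComplexExponential.

Lemma periodic_onM (R : realType) (S : nzRingType) (N1 N2 N3 : nat) base
    (f g : 'cV[R]_3 -> S) :
  periodic_on N1 N2 N3 base f -> periodic_on N1 N2 N3 base g ->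
  periodic_on N1 N2 N3 base (fun r => f r * g r).
Proof. by move=> f_per g_per k1 k2 k3 a b c; rewrite f_per g_per. Qed.

Section FourierTransform.
Variables (R : realType) (N1 N2 N3 : nat).
Hypotheses (N1_gt0 : (0 < N1)%N) (N2_gt0 : (0 < N2)%N) (N3_gt0 : (0 < N3)%N).
Local Notation C := R[i].
Local Notation fhat := (fhat N1 N2 N3).
Implicit Types (base q : 'cV[R]_3) (f g : 'cV[R]_3 -> C).

Lemma eq_fhat base f g q : f =1 g -> fhat base f q = fhat base g q.
Proof.
by move=> fg; rewrite /fhat; under eq_bigr do under eq_bigr do under eq_bigr do rewrite fg.
Qed.

Lemma fhatD base f g q :
  fhat base (fun r => f r + g r) q = fhat base f q + fhat base g q.
Proof.
rewrite /fhat -mulrDr; congr (_ * _); rewrite -big_split; apply: eq_bigr => a _.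
rewrite -big_split; apply: eq_bigr => b _; rewrite -big_split; apply: eq_bigr => c _.
by rewrite mulrDl.
Qed.

Lemma fhatZ base (x : C) f q :
  fhat base (fun r => x * f r) q = x * fhat base f q.
Proof.
rewrite /fhat mulrCA; congr (_ * _); rewrite mulr_sumr; apply: eq_bigr => a _.
rewrite mulr_sumr; apply: eq_bigr => b _; rewrite mulr_sumr; apply: eq_bigr => c _.
by rewrite mulrA.
Qed.

Lemma fhat_const base (x : C) q :
  fhat base (fun=> x) q = x * fhat base (fun=> 1) q.
Proof. by rewrite -fhatZ; apply: eq_fhat => r; rewrite mulr1. Qed.

Lemma fhatN base f q : fhat base (fun r => - f r) q = - fhat base f q.
Proof. by rewrite -mulN1r -fhatZ; apply: eq_fhat => r; rewrite mulN1r. Qed.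

Lemma fhatB base f g q :
  fhat base (fun r => f r - g r) q = fhat base f q - fhat base g q.
Proof. by rewrite fhatD fhatN. Qed.

Lemma fhat_sum (I : Type) (s : seq I) base (F : I -> 'cV[R]_3 -> C) q :
  fhat base (fun r => \sum_(k <- s) F k r) q = \sum_(k <- s) fhat base (F k) q.
Proof.
elim: s => [|k s IHs].
  rewrite big_nil (@eq_fhat _ _ (fun=> 0 * 0)) ?fhatZ ?mul0r // => r.
  by rewrite big_nil ?mulr0.
by rewrite big_cons -IHs -fhatD; apply: eq_fhat => r; rewrite big_cons.
Qed.

Lemma sum_lattice_period_shift base f (s1 s2 s3 : int) :
  periodic_on N1 N2 N3 base f ->
  \sum_(a < N1) \sum_(b < N2) \sum_(c < N3)
     f (base + lat R (a%:Z + s1) (b%:Z + s2) (c%:Z + s3))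
  = \sum_(a < N1) \sum_(b < N2) \sum_(c < N3) f (base + lat R a b c).
Proof.
move=> f_per.
apply: (sum_ord3_periodic_shift (G := fun a b c => f (base + lat R a b c))) => //.
- by move=> a b c; have := f_per a b c 1 0 0; rewrite mul1r !mul0r !addr0.
- by move=> a b c; have := f_per a b c 0 1 0; rewrite mul1r !mul0r !addr0.
- by move=> a b c; have := f_per a b c 0 0 1; rewrite mul1r !mul0r !addr0.
Qed.

Section Frequency.
Variables (h1 : 'I_N1) (h2 : 'I_N2) (h3 : 'I_N3).
Local Notation q := (qvec R h1 h2 h3).

Lemma dotp_qvec_lat_period (a b c : int) :
  dotp q (lat R (a * N1%:Z) (b * N2%:Z) (c * N3%:Z))
  = 2 * pi * (a * h1%:Z + b * h2%:Z + c * h3%:Z)%:~R.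
Proof.
rewrite /qvec /lat dotp_vec3 !intrM /= !pmulrn.
transitivity (a%:~R * (N1%:R * (2 * pi * h1%:R / N1%:R))
            + b%:~R * (N2%:R * (2 * pi * h2%:R / N2%:R))
            + c%:~R * (N3%:R * (2 * pi * h3%:R / N3%:R)) : R); first ring.
by rewrite !qvec_coord_mul !intrD !intrM /= !pmulrn; ring.
Qed.

Lemma periodic_on_expi_qvec base :
  periodic_on N1 N2 N3 base (fun r => expi (- dotp q r)).
Proof.
move=> k1 k2 k3 a b c.
by rewrite latD addrA (dotpD _ (base + _)) dotp_qvec_lat_period opprD -mulrN -mulrNz expiD2piz.
Qed.

Lemma fhat_translate g e : periodic_on N1 N2 N3 (baseP R) g -> SP_offset e ->
  fhat (baseS R) (fun r => g (r + e)) q = expi (dotp q e) * fhat (baseP R) g q.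
Proof.
move=> g_per [s1 [s2 [s3 e_off]]].
have ge_per := periodic_onM g_per (periodic_on_expi_qvec (baseP R)).
rewrite /fhat mulrCA; congr (_ * _).
rewrite -(sum_lattice_period_shift s1 s2 s3 ge_per) !mulr_sumr.
apply: eq_bigr => a _; rewrite mulr_sumr; apply: eq_bigr => b _.
rewrite mulr_sumr; apply: eq_bigr => c _.
have -> : baseP R + lat R (a%:Z + s1) (b%:Z + s2) (c%:Z + s3)
          = baseS R + lat R a b c + e.
  by rewrite latD (addrC (lat R a b c)) addrA -e_off addrAC.
rewrite [in RHS](dotpD _ _ e) opprD expiD mulrCA; congr (_ * _).
by rewrite mulrCA [expi (dotp _ e) * _]mulrC expiNr mulr1.
Qed.

Lemma fhat_stencil (f : 'cV[R]_3 -> R) (w : 'cV[R]_3 -> R) (s : seq 'cV[R]_3) :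
  periodic_on N1 N2 N3 (baseP R) f -> {in s, forall e, SP_offset e} ->
  fhat (baseS R) (fun r => toC (\sum_(e <- s) w e * f (r + e))) q
  = (\sum_(e <- s) toC (w e) * expi (dotp q e)) * fhat (baseP R) (fun r => toC (f r)) q.
Proof.
move=> f_per s_off.
rewrite (@eq_fhat _ _ (fun r => \sum_(e <- s) toC (w e) * toC (f (r + e)))); last first.
  by move=> r; rewrite /toC rmorph_sum; apply: eq_bigr => e _; rewrite rmorphM.
rewrite fhat_sum mulr_suml; apply: eq_big_seq => e e_s.
rewrite fhatZ (fhat_translate (g := fun r => toC (f r)) _ (s_off e e_s)) ?mulrA //.
by move=> k1 k2 k3 a b c; rewrite f_per.
Qed.

Lemma fhat_Dplus (f : 'cV[R]_3 -> R) (i : 'I_3) :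
  periodic_on N1 N2 N3 (baseP R) f ->
  fhat (baseS R) (fun r => toC (Dplus f r i)) q
  = Dvec q i ord0 * fhat (baseP R) (fun r => toC (f r)) q.
Proof.
by move=> f_per; rewrite fhat_stencil ?mxE // => e /Tset_SP_offset[].
Qed.

Lemma fhat_Dminus (f : 'cV[R]_3 -> R) (i : 'I_3) :
  periodic_on N1 N2 N3 (baseP R) f ->
  fhat (baseS R) (fun r => toC (Dminus f r i)) q
  = - conjc (Dvec q i ord0) * fhat (baseP R) (fun r => toC (f r)) q.
Proof.
move=> f_per.
have Dminus_stencil r : Dminus f r i = \sum_(e <- map -%R (Tset R)) e i ord0 * f (r + e).
  by rewrite /Dminus big_map -sumrN; apply: eq_bigr => e _; rewrite mxE mulNr.
rewrite (eq_fhat _ _ (fun r => congr1 (@toC R) (Dminus_stencil r))).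
rewrite fhat_stencil //; last first.
  by move=> _ /mapP[e /Tset_SP_offset[_ ?] ->].
congr (_ * _); rewrite big_map mxE rmorph_sum -sumrN; apply: eq_bigr => e _.
rewrite mxE dotpN -conjc_expi rmorphM /toC rmorphN mulNr; congr (- (_ * _)).
exact/esym/conjc_real.
Qed.

Definition Dsymbol (b : bool) : 'cV[C]_3 :=
  if b then Dvec q else - conjv (Dvec q).

Lemma fhat_Dpm b (f : 'cV[R]_3 -> R) (i : 'I_3) :
  periodic_on N1 N2 N3 (baseP R) f ->
  fhat (baseS R) (fun r => toC (Dpm b f r i)) q
  = Dsymbol b i ord0 * fhat (baseP R) (fun r => toC (f r)) q.
Proof.
by case: b => f_per; rewrite /Dsymbol ?fhat_Dminus ?fhat_Dplus // !mxE.
Qed.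

Lemma fhat1_lat_shift (t1 t2 t3 : int) :
  fhat (baseS R) (fun=> 1) q
  = expi (- dotp q (lat R t1 t2 t3)) * fhat (baseS R) (fun=> 1) q.
Proof.
have e_per := periodic_onM (f := fun=> 1) (fun _ _ _ _ _ _ => erefl)
  (periodic_on_expi_qvec (baseS R)).
rewrite /fhat mulrCA; congr (_ * _).
rewrite -{1}(sum_lattice_period_shift t1 t2 t3 e_per) !mulr_sumr.
apply: eq_bigr => a _; rewrite mulr_sumr; apply: eq_bigr => b _.
rewrite mulr_sumr; apply: eq_bigr => c _.
by rewrite latD addrA (dotpD _ _ (lat R t1 t2 t3)) opprD expiD !mul1r mulrC.
Qed.

Section StrainStress.
Variables (lam : 'cV[R]_3 -> tensor4 R) (eps0 : 'cV[R]_3 -> 'M[R]_3)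
  (epsbar : 'M[R]_3) (lam0 : tensor4 R) (u : 'cV[R]_3 -> 'cV[R]_3).
Hypothesis u_per : periodic_on N1 N2 N3 (baseP R) u.

Lemma mhatS_epsm b :
  mhatS N1 N2 N3 (epsm b epsbar u) q
  = fhat (baseS R) (fun=> 1) q *: map_mx (@toC R) epsbar
    + symt (Dsymbol b) (vhatP N1 N2 N3 u q).
Proof.
have uj_per j : periodic_on N1 N2 N3 (baseP R) (fun x => u x j ord0).
  by move=> k1 k2 k3 a c d; rewrite u_per.
apply/matrixP => i j; rewrite !mxE.
rewrite (@eq_fhat _ _ (fun r => toC (epsbar i j) + 2^-1 *
    (toC (Dpm b (fun x => u x j ord0) r i) + toC (Dpm b (fun x => u x i ord0) r j)))).
  by rewrite fhatD fhat_const fhatZ fhatD !fhat_Dpm ?uj_per //; ring.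
by move=> r; rewrite /epsm !mxE /toC rmorphD rmorphM fmorphV rmorph_nat rmorphD mulrC.
Qed.

Lemma mhatS_taum b :
  mhatS N1 N2 N3 (taum b lam eps0 lam0 epsbar u) q
  = mhatS N1 N2 N3 (sigmam b lam eps0 epsbar u) q
    - ddotC lam0 (mhatS N1 N2 N3 (epsm b epsbar u) q).
Proof.
apply/matrixP => i j; rewrite !mxE.
rewrite (@eq_fhat _ _ (fun r => toC (sigmam b lam eps0 epsbar u r i j) -
    \sum_(k < 3) \sum_(l < 3) toC (lam0 i j k l) * toC (epsm b epsbar u r k l))).
  rewrite fhatB fhat_sum; congr (_ - _); apply: eq_bigr => k _.
  by rewrite fhat_sum; apply: eq_bigr => l _; rewrite fhatZ !mxE.
move=> r; rewrite /taum !mxE /toC rmorphB; congr (_ - _); rewrite rmorph_sum.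
by apply: eq_bigr => k _; rewrite rmorph_sum; apply: eq_bigr => l _; rewrite rmorphM.
Qed.

End StrainStress.
End Frequency.
End FourierTransform.

Section SymbolZeros.
Variable R : realType.
Local Notation C := R[i].

Lemma Dvec_vec3 (a b c : R) (i : 'I_3) :
  Dvec (vec3 a b c) i ord0 = expi ((a + b + c) / 2) *
    (toC ((vec3 (1/2) (1/2) (1/2) : 'cV[R]_3) i ord0)
     + toC ((vec3 (1/2) (-(1/2)) (-(1/2)) : 'cV[R]_3) i ord0) * expi (- (b + c))
     + toC ((vec3 (-(1/2)) (1/2) (-(1/2)) : 'cV[R]_3) i ord0) * expi (- (a + c))
     + toC ((vec3 (-(1/2)) (-(1/2)) (1/2) : 'cV[R]_3) i ord0) * expi (- (a + b))).
Proof.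
rewrite /Dvec mxE /Tset !big_cons big_nil addr0 !dotp_vec3.
have -> : a * (1/2) + b * (1/2) + c * (1/2) = (a + b + c) / 2 by field.
have -> : a * (1/2) + b * (-(1/2)) + c * (-(1/2)) = (a + b + c) / 2 - (b + c) by field.
have -> : a * (-(1/2)) + b * (1/2) + c * (-(1/2)) = (a + b + c) / 2 - (a + c) by field.
have -> : a * (-(1/2)) + b * (-(1/2)) + c * (1/2) = (a + b + c) / 2 - (a + b) by field.
by rewrite !expiD; ring.
Qed.

Lemma Dvec_vec3_eq0 (a b c : R) :
  Dvec (vec3 a b c) = 0 <->
  [/\ expi (- (b + c)) = 1, expi (- (a + c)) = 1 & expi (- (a + b)) = 1].
Proof.
split=> [D0 | [E1 E2 E3]]; last first.
  apply/matrixP => i j; rewrite (ord1 j) [RHS]mxE Dvec_vec3 E1 E2 E3 !mulr1 -!rmorphD.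
  have T_sum0 : vec3 (1/2) (1/2) (1/2) + vec3 (1/2) (-(1/2)) (-(1/2))
    + vec3 (-(1/2)) (1/2) (-(1/2)) + vec3 (-(1/2)) (-(1/2)) (1/2) = 0 :> 'cV[R]_3.
    by rewrite !vec3D -vec30; congr vec3; ring.
  have := congr1 (fun M : 'cV[R]_3 => M i ord0) T_sum0; rewrite !mxE => ->.
  by rewrite /toC rmorph0 mulr0.
have D0i (k : 'I_3) : Dvec (vec3 a b c) k ord0 = 0 by rewrite D0 mxE.
move: (D0i ord0) (D0i (@Ordinal 3 1 isT)) (D0i (@Ordinal 3 2 isT)).
rewrite !Dvec_vec3 !mxE /= /toC !rmorphN !rmorphM !fmorphV !rmorph1 !rmorph_nat.
set w := expi _; set x1 := expi (- (b + c)); set x2 := expi (- (a + c)).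
set x3 := expi (- (a + b)); set h := (1 / 2 : C).
have w_neq0 : w != 0 by exact: expi_neq0.
have h2 : h + h = 1 by rewrite /h; field.
move=> /eqP + /eqP + /eqP; rewrite !mulf_eq0 (negPf w_neq0) /= => /eqP E1 /eqP E2 /eqP E3.
(* The sum of two components of D is w (1 - x_k) for the third index k. *)
have eq1 y (Ly Lz : C) : Ly = 0 -> Lz = 0 -> Ly + Lz = (h + h) * (1 - y) -> y = 1.
  by move=> -> ->; rewrite addr0 h2 mul1r => /eqP; rewrite eq_sym subr_eq0 => /eqP.
split; [apply: (eq1 _ _ _ E2 E3) | apply: (eq1 _ _ _ E1 E3) | apply: (eq1 _ _ _ E1 E2)]; ring.
Qed.

Lemma Dvec_qvec_eq0 (N1 N2 N3 : nat) (h1 : 'I_N1) (h2 : 'I_N2) (h3 : 'I_N3) :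
  Dvec (qvec R h1 h2 h3) = 0 ->
  qvec R h1 h2 h3 = vec3 0 0 0 \/ qvec R h1 h2 h3 = vec3 pi pi pi.
Proof.
rewrite /qvec; have pi_gt0 := @pi_gt0 R.
have sum_period (s t : R) : 0 <= s < 2 * pi -> 0 <= t < 2 * pi ->
    expi (- (s + t)) = 1 -> s + t = 0 \/ s + t = 2 * pi.
  move=> /andP[s_ge0 s_lt] /andP[t_ge0 t_lt] /(congr1 (@complex.Re R)) /=.
  by rewrite cosN; apply: cos_eq1_04pi; lra.
have := qvec_coord_bound R h1; have := qvec_coord_bound R h2.
have := qvec_coord_bound R h3.
set a := 2 * pi * h1%:R / N1%:R; set b := 2 * pi * h2%:R / N2%:R.
set c := 2 * pi * h3%:R / N3%:R => c_in b_in a_in.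
move=> /Dvec_vec3_eq0[/(sum_period _ _ b_in c_in) bc /(sum_period _ _ a_in c_in) ac
  /(sum_period _ _ a_in b_in) ab].
move: a_in b_in c_in => /andP[? ?] /andP[? ?] /andP[? ?].
case: bc ac ab => [bc|bc] [ac|ac] [ab|ab]; try (exfalso; lra).
  by left; congr vec3; lra.
by right; congr vec3; lra.
Qed.

End SymbolZeros.

Lemma fhat1_neq0_Dvec_eq0 (R : realType) (N1 N2 N3 : nat)
    (h1 : 'I_N1) (h2 : 'I_N2) (h3 : 'I_N3) :
  (0 < N1)%N -> (0 < N2)%N -> (0 < N3)%N ->
  fhat N1 N2 N3 (baseS R) (fun=> 1) (qvec R h1 h2 h3) != 0 ->
  Dvec (qvec R h1 h2 h3) = 0.
Proof.
move=> N1_gt0 N2_gt0 N3_gt0 F_neq0.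
have shift1 t1 t2 t3 : expi (- dotp (qvec R h1 h2 h3) (lat R t1 t2 t3)) = 1.
  apply: (mulIf F_neq0); rewrite mul1r.
  exact: esym (fhat1_lat_shift _ N1_gt0 N2_gt0 N3_gt0 _ _ _ _ _ _).
move: (shift1 0 1 1) (shift1 1 0 1) (shift1 1 1 0).
rewrite /qvec /lat !dotp_vec3 !mulr0z !mulr1z !mulr0 !mulr1 !add0r !addr0 => E1 E2 E3.
exact/Dvec_vec3_eq0.
Qed.

Lemma contract_sym_symprod (T : numFieldType) (A : 'I_3 -> 'I_3 -> T)
    (y z : 'I_3 -> T) :
  (forall k l, A k l = A l k) ->
  \sum_(k < 3) \sum_(l < 3) A k l * ((y k * z l + y l * z k) / 2)
  = \sum_(k < 3) \sum_(l < 3) A k l * (y k * z l).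
Proof.
move=> A_sym.
have swap : \sum_(k < 3) \sum_(l < 3) A k l * (y l * z k)
            = \sum_(k < 3) \sum_(l < 3) A k l * (y k * z l).
  by rewrite exchange_big; apply: eq_bigr => k _; apply: eq_bigr => l _; rewrite A_sym.
transitivity ((\sum_(k < 3) \sum_(l < 3) A k l * (y k * z l)) / 2
              + (\sum_(k < 3) \sum_(l < 3) A k l * (y l * z k)) / 2).
  rewrite !mulr_suml -big_split; apply: eq_bigr => k _.
  by rewrite !mulr_suml -big_split; apply: eq_bigr => l _ /=; ring.
by rewrite swap; field.
Qed.

Section Energy.
Variables (R : realType) (L : tensor4 R).
Hypotheses (L_minor : minor_sym L) (L_pd : posdef_sym L).

Definition energy (xi : 'M[R]_3) : R :=
  \sum_(i < 3) \sum_(j < 3) \sum_(k < 3) \sum_(l < 3) xi i j * L i j k l * xi k l.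

Lemma energy_ge0 xi : xi^T = xi -> 0 <= energy xi.
Proof.
move=> xi_sym; have [->|xi_neq0] := eqVneq xi 0; last exact/ltW/L_pd.
by apply: sumr_ge0 => i _; apply: sumr_ge0 => j _; apply: sumr_ge0 => k _;
  apply: sumr_ge0 => l _; rewrite !mxE !mul0r.
Qed.

Lemma energy_eq0 xi : xi^T = xi -> energy xi = 0 -> xi = 0.
Proof.
move=> xi_sym xi0; apply/eqP; apply: contraT => xi_neq0.
by have := L_pd xi_sym xi_neq0; rewrite -/(energy xi) xi0 ltxx.
Qed.

Definition symprod (a r : 'I_3 -> R) : 'M[R]_3 :=
  \matrix_(i < 3, j < 3) ((a i * r j + a j * r i) / 2).

Lemma symprod_sym a r : (symprod a r)^T = symprod a r.
Proof. by apply/matrixP => i j; rewrite !mxE addrC. Qed.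

Lemma symprod_eq0 a r j : symprod a r = 0 -> r j != 0 -> forall i, a i = 0.
Proof.
move=> ar0 rj_neq0 i.
have E i' j' : a i' * r j' + a j' * r i' = 0.
  have := congr1 (fun M : 'M[R]_3 => M i' j') ar0; rewrite !mxE.
  by move/eqP; rewrite mulf_eq0 invr_eq0 pnatr_eq0 orbF => /eqP.
have aj0 : a j = 0.
  have /eqP := E j j; rewrite -mulr2n mulrn_eq0 /= mulf_eq0 (negPf rj_neq0) orbF.
  by move/eqP.
by have /eqP := E i j; rewrite aj0 mul0r addr0 mulf_eq0 (negPf rj_neq0) orbF => /eqP.
Qed.

Lemma energy_symprod a r :
  energy (symprod a r) = \sum_(j < 3) \sum_(k < 3) \sum_(i < 3) \sum_(l < 3)
                           a i * r j * L i j k l * (a l * r k).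
Proof.
pose S i j := \sum_(k < 3) \sum_(l < 3) L i j k l * (a k * r l).
have inner i j : \sum_(k < 3) \sum_(l < 3) symprod a r i j * L i j k l * symprod a r k l
                 = S i j * ((a i * r j + a j * r i) / 2).
  transitivity (symprod a r i j *
      \sum_(k < 3) \sum_(l < 3) L i j k l * ((a k * r l + a l * r k) / 2)).
    rewrite mulr_sumr; apply: eq_bigr => k _; rewrite mulr_sumr; apply: eq_bigr => l _.
    by rewrite !mxE; ring.
  rewrite (contract_sym_symprod (A := L i j)); first by rewrite mxE mulrC.
  by move=> k l; case: (L_minor i j k l) => _ ->.
rewrite /energy; under eq_bigr => i _ do under eq_bigr => j _ do rewrite inner.
rewrite (contract_sym_symprod (A := S)); last first.
  move=> i j; apply: eq_bigr => k _; apply: eq_bigr => l _.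
  by case: (L_minor i j k l) => ->.
rewrite exchange_big /=; apply: eq_bigr => j _; rewrite [RHS]exchange_big /=.
apply: eq_bigr => i _; rewrite /S mulr_suml [RHS]exchange_big /=.
apply: eq_bigr => k _; rewrite mulr_suml; apply: eq_bigr => l _.
by case: (L_minor i j l k) => _ ->; ring.
Qed.

End Energy.

Section Acoustic.
Variables (R : realType) (L : tensor4 R).
Hypothesis L_minor : minor_sym L.
Local Notation C := R[i].

(* [Mmat L q] unfolds to [acoustic L (Dvec q)]. *)
Definition acoustic (x : 'cV[C]_3) : 'M[C]_3 :=
  \matrix_(j < 3, k < 3) \sum_(i < 3) \sum_(l < 3)
     toC (L i j k l) * (conjc (x i ord0) * x l ord0 + x i ord0 * conjc (x l ord0)).

Lemma ddotC_symt (x v : 'cV[C]_3) i j :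
  ddotC L (symt x v) i j
  = \sum_(k < 3) \sum_(l < 3) toC (L i j k l) * (x k ord0 * v l ord0).
Proof.
rewrite mxE -(contract_sym_symprod (A := fun k l => toC (L i j k l))); last first.
  by move=> k l; case: (L_minor i j k l) => _ ->.
by apply: eq_bigr => k _; apply: eq_bigr => l _; rewrite mxE.
Qed.

Lemma ddotC_symt_acoustic (x v : 'cV[C]_3) :
  ddotC L (symt x v) *m conjv x + ddotC L (symt (conjv x) v) *m x
  = acoustic x *m v.
Proof.
apply/matrixP => i z; rewrite (ord1 z) !mxE.
transitivity (\sum_(a < 3) \sum_(b < 3) \sum_(l < 3) toC (L i a b l) *
  (conjc (x a ord0) * x b ord0 + x a ord0 * conjc (x b ord0)) * v l ord0).
  rewrite -big_split; apply: eq_bigr => a _.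
  rewrite !ddotC_symt !mulr_suml -big_split; apply: eq_bigr => b _.
  by rewrite !mulr_suml -big_split; apply: eq_bigr => l _; rewrite !mxE /=; ring.
symmetry; under eq_bigr => l _ do rewrite mxE mulr_suml.
rewrite exchange_big; apply: eq_bigr => a _ /=.
under eq_bigr => l _ do rewrite mulr_suml.
rewrite exchange_big; apply: eq_bigr => b _ /=; apply: eq_bigr => l _.
by case: (L_minor a i l b) => -> _; case: (L_minor i a l b) => _ ->.
Qed.

Definition acousticR (x : 'cV[C]_3) : 'M[R]_3 :=
  \matrix_(j < 3, k < 3) \sum_(i < 3) \sum_(l < 3) L i j k l *
    (2 * (complex.Re (x i ord0) * complex.Re (x l ord0)
          + complex.Im (x i ord0) * complex.Im (x l ord0))).

Lemma conjc_mul_addC (z w : C) :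
  conjc z * w + z * conjc w
  = ((2 * (complex.Re z * complex.Re w + complex.Im z * complex.Im w))%:C)%C.
Proof.
case: z => a b; case: w => c d; rewrite /conjc /=.
rewrite -[((_ +i* _)%C * (_ +i* _)%C)]/(_ +i* _)%C.
rewrite -[((_ +i* _)%C * (_ +i* _)%C)]/(_ +i* _)%C.
rewrite -[((_ +i* _)%C + (_ +i* _)%C)]/(_ +i* _)%C.
by congr Complex; ring.
Qed.

Lemma acoustic_real x : acoustic x = map_mx (real_complex R) (acousticR x).
Proof.
apply/matrixP => j k; rewrite !mxE rmorph_sum; apply: eq_bigr => i _.
by rewrite rmorph_sum; apply: eq_bigr => l _; rewrite rmorphM conjc_mul_addC.
Qed.

Hypothesis L_pd : posdef_sym L.

Lemma acousticR_unit x : x != 0 -> acousticR x \in unitmx.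
Proof.
(* A null vector r of [acousticR x] has r^T M r = 2 (E (Re x (x)_s r) +
   E (Im x (x)_s r)) = 0, so both symmetrised products vanish. *)
move=> x_neq0; rewrite unitmxE unitfE; apply/negP => /det0P[r r_neq0 rM0].
pose a i := complex.Re (x i ord0); pose b i := complex.Im (x i ord0).
pose rr j := r ord0 j.
have quad0 : \sum_(j < 3) \sum_(k < 3) rr j * acousticR x j k * rr k = 0.
  rewrite exchange_big /=; apply: big1 => k _.
  have := congr1 (fun M : 'rV[R]_3 => M ord0 k) rM0; rewrite !mxE => rM0k.
  by rewrite -mulr_suml rM0k mul0r.
have quadE : \sum_(j < 3) \sum_(k < 3) rr j * acousticR x j k * rr k
             = 2 * (energy L (symprod a rr) + energy L (symprod b rr)).
  rewrite !energy_symprod // -big_split mulr_sumr; apply: eq_bigr => j _.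
  rewrite -big_split mulr_sumr; apply: eq_bigr => k _.
  rewrite mxE -big_split mulr_sumr mulr_suml mulr_sumr; apply: eq_bigr => i _.
  rewrite -big_split mulr_sumr mulr_suml mulr_sumr; apply: eq_bigr => l _.
  by rewrite /a /b /=; ring.
have Ea := energy_ge0 L_pd (symprod_sym a rr).
have Eb := energy_ge0 L_pd (symprod_sym b rr).
have /(energy_eq0 L_pd (symprod_sym _ _)) a0 : energy L (symprod a rr) = 0 by lra.
have /(energy_eq0 L_pd (symprod_sym _ _)) b0 : energy L (symprod b rr) = 0 by lra.
have [j rj_neq0] : exists j, rr j != 0.
  apply/existsP; apply: contraT => /existsPn rr0; exfalso; move/eqP: r_neq0; apply.
  by apply/matrixP => i j; rewrite (ord1 i) mxE; exact/eqP/negPn/rr0.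
move/eqP: x_neq0; apply; apply/matrixP => i z; rewrite (ord1 z) mxE.
have := symprod_eq0 a0 rj_neq0 i; have := symprod_eq0 b0 rj_neq0 i.
by rewrite /a /b; case: (x i ord0) => c d /= -> ->.
Qed.

Lemma acoustic_unit x : x != 0 -> acoustic x \in unitmx.
Proof. by move=> x_neq0; rewrite acoustic_real map_unitmx acousticR_unit. Qed.

End Acoustic.

Lemma Omega_mul_acoustic (R : realType) (L : tensor4 R) (q : 'cV[R]_3)
    (v : 'cV[R[i]]_3) :
  minor_sym L -> posdef_sym L -> (Dvec q = 0 -> v = 0) ->
  Omega L q *m (acoustic L (Dvec q) *m v) = v.
Proof.
move=> L_minor L_pd Dv; rewrite /Omega; case: eqP => [D0 | /eqP D_neq0].
  by rewrite mul0mx Dv.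
by rewrite mulKmx // acoustic_unit.
Qed.

Section DdotC.
Variables (R : realType) (L : tensor4 R).

Lemma ddotCD (A B : 'M[R[i]]_3) : ddotC L (A + B) = ddotC L A + ddotC L B.
Proof.
apply/matrixP => i j; rewrite !mxE -big_split; apply: eq_bigr => k _.
by rewrite -big_split; apply: eq_bigr => l _; rewrite mxE mulrDr.
Qed.

Lemma ddotCZ (c : R[i]) (A : 'M[R[i]]_3) : ddotC L (c *: A) = c *: ddotC L A.
Proof.
apply/matrixP => i j; rewrite !mxE mulr_sumr; apply: eq_bigr => k _.
by rewrite mulr_sumr; apply: eq_bigr => l _; rewrite mxE mulrCA.
Qed.

Lemma ddotCN (A : 'M[R[i]]_3) : ddotC L (- A) = - ddotC L A.
Proof. by rewrite -scaleN1r ddotCZ scaleN1r. Qed.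

End DdotC.

Lemma symtNl (R : realType) (x v : 'cV[R[i]]_3) : symt (- x) v = - symt x v.
Proof. by apply/matrixP => i j; rewrite !mxE !mulNr -opprD mulNr. Qed.

Lemma addmx_regroup (K : comNzRingType) (m n : nat) (c : K)
    (X1 X2 Y1 Y2 Z1 Z2 : 'M[K]_(m, n)) :
  - (X1 - (c *: Y1 + Z1)) + (X2 - (c *: Y2 - Z2))
  = - (X1 - X2) + c *: (Y1 - Y2) + (Z1 + Z2).
Proof. by apply/matrixP => i j; rewrite !mxE; ring. Qed.

Lemma fhat1_scale_Omega (R : realType) (N1 N2 N3 : nat) (L : tensor4 R)
    (h1 : 'I_N1) (h2 : 'I_N2) (h3 : 'I_N3) :
  (0 < N1)%N -> (0 < N2)%N -> (0 < N3)%N ->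
  fhat N1 N2 N3 (baseS R) (fun=> 1) (qvec R h1 h2 h3) *: Omega L (qvec R h1 h2 h3)
  = 0.
Proof.
move=> N1_gt0 N2_gt0 N3_gt0.
set F := fhat _ _ _ _ _ _.
have [-> | /(fhat1_neq0_Dvec_eq0 N1_gt0 N2_gt0 N3_gt0) D0] := eqVneq F 0.
  by rewrite scale0r.
by rewrite /Omega D0 eqxx scaler0.
Qed.

Theorem mainTheorem6 (R : realType) (N1 N2 N3 : nat)
  (hN1 : (0 < N1)%N) (hN2 : (0 < N2)%N) (hN3 : (0 < N3)%N)
  (eN1 : ~~ odd N1) (eN2 : ~~ odd N2) (eN3 : ~~ odd N3)
  (lam : 'cV[R]_3 -> tensor4 R) (eps0 : 'cV[R]_3 -> 'M[R]_3)
  (epsbar : 'M[R]_3) (lam0 : tensor4 R) (u : 'cV[R]_3 -> 'cV[R]_3)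
  (lam_per : periodic_on N1 N2 N3 (baseS R) lam)
  (lam_minor : forall r, minor_sym (lam r))
  (lam_major : forall r, major_sym (lam r))
  (eps0_per : periodic_on N1 N2 N3 (baseS R) eps0)
  (eps0_sym : forall r, (eps0 r)^T = eps0 r)
  (epsbar_sym : epsbar^T = epsbar)
  (lam0_minor : minor_sym lam0) (lam0_major : major_sym lam0)
  (lam0_pd : posdef_sym lam0)
  (u_per : periodic_on N1 N2 N3 (baseP R) u)
  (u0 : vhatP N1 N2 N3 u (vec3 0 0 0) = 0)
  (upi : vhatP N1 N2 N3 u (vec3 pi pi pi) = 0) :
  (forall (h1 : 'I_N1) (h2 : 'I_N2) (h3 : 'I_N3),
     let q := qvec R h1 h2 h3 in
     let D := Dvec q in
     let sig1 := mhatS N1 N2 N3 (sigmam true lam eps0 epsbar u) q in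
     let sig2 := mhatS N1 N2 N3 (sigmam false lam eps0 epsbar u) q in
     let tau1 := mhatS N1 N2 N3 (taum true lam eps0 lam0 epsbar u) q in
     let tau2 := mhatS N1 N2 N3 (taum false lam eps0 lam0 epsbar u) q in
     Omega lam0 q *m (- (tau1 *m conjv D) + tau2 *m D)
     = vhatP N1 N2 N3 u q - Omega lam0 q *m (sig1 *m conjv D - sig2 *m D))
  /\
  (forall (h1 : 'I_N1) (h2 : 'I_N2) (h3 : 'I_N3) (v : 'cV[R[i]]_3),
     let q := qvec R h1 h2 h3 in
     let D := Dvec q in
     (D = 0 -> v = 0) ->
     Omega lam0 q *m (ddotC lam0 (symt D v) *m conjv D
                      + ddotC lam0 (symt (conjv D) v) *m D)
     = v).
Proof.
split=> [h1 h2 h3 q D sig1 sig2 tau1 tau2 | h1 h2 h3 v q D Dv]; last first.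
  by rewrite ddotC_symt_acoustic //; apply: Omega_mul_acoustic.
have uhat_D0 : D = 0 -> vhatP N1 N2 N3 u q = 0.
  by rewrite /q; case/Dvec_qvec_eq0 => ->.
rewrite /tau1 /tau2 !mhatS_taum // !mhatS_epsm // /Dsymbol -/q -/D -/sig1 -/sig2.
rewrite !ddotCD !ddotCZ symtNl ddotCN !mulmxBl !mulmxDl -!scalemxAl addmx_regroup.
set X := sig1 *m conjv D - sig2 *m D.
rewrite mulmxDr mulmxDr mulmxN -scalemxAr scalemxAl.
rewrite fhat1_scale_Omega // mul0mx.
by rewrite addr0 ddotC_symt_acoustic // Omega_mul_acoustic // addrC.
Qed.
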